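(* Let $G$ be a finite group and let $H=A\oplus B$ be the algebra constructed below. Then $H$ is a semisimple associative algebra, $A$ is a central subalgebra of $H$, and $B$ is a two-sided ideal of $H$.
   Context: Let $\mathbb C[G]$ be the group algebra and $A$ its center, with basis $E_\alpha=\sum_{g\in\alpha}g$ over conjugacy classes $\alpha$. Let $M(G)=\operatorname{End}(\mathbb C[G])$ with matrix units $E_{g_1,g_2}$ with respect to the basis $G$ ($E_{g_1,g_2}(h)=\delta_{g_2,h}g_1$). Two ordered pairs $(g_1,g_2),(g'_1,g'_2)$ are conjugate if $g'_i=gg_ig^{-1}$ for some $g\in G$. For each conjugacy class $\beta$ of ordered pairs $(s_1,s_2)$ of elements with $s_1^2=s_2^2=1$ put $E_\beta=\sum_{(s',s'')\in\beta}E_{s',s''}$, and let $B\subset M(G)$ be the span of the $E_\beta$. Let $V:\mathbb C[G]\to M(G)$ be the representation $V(g)(x)=gxg^{-1}$ and $V_\alpha=V(E_\alpha)$. $H=A\oplus B$ (as vector space) carries the multiplication given by the products in $A$ and in $B$ (matrix product) and $E_\alpha E_\beta=V_\alpha E_\beta$, $E_\beta E_\alpha=E_\beta V_\alpha$, extended bilinearly. *)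

From HB Require Import structures.
From mathcomp Require Import all_boot all_order all_algebra all_fingroup all_field.
Set Implicit Arguments. Unset Strict Implicit. Unset Printing Implicit Defensive.
Import GRing.Theory Num.Theory.
Local Open Scope ring_scope.
Local Open Scope group_scope.

Section Generic.
Variable V : lmodType algC.
Implicit Types (S I Hs : V -> Prop) (mul : V -> V -> V).

Definition subspace S := S 0%R /\ (forall (c : algC) x y, S x -> S y -> S (c *: x + y)%R).

Definition two_sided_ideal Hs mul I :=
  [/\ subspace I, (forall x, I x -> Hs x) &
      forall x y, Hs x -> I y -> I (mul x y) /\ I (mul y x)].

Definition nprod mul (x : V) (s : seq V) := foldl mul x s.

(* I is nilpotent: some power I^(n+1) vanishes *)
Definition nilpotent_set mul I :=
  exists n : nat, forall (x : V) (s : n.-tuple V),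
    I x -> (forall i, I (tnth s i)) -> nprod mul x s = 0%R.

(* semisimple (finite-dimensional) algebra: no nonzero nilpotent two-sided
   ideal, i.e. the (Jacobson) radical is zero *)
Definition semisimple_alg Hs mul :=
  forall I, two_sided_ideal Hs mul I -> nilpotent_set mul I -> forall x, I x -> x = 0%R.

Definition assoc_unital_alg Hs mul :=
  [/\ forall x y, Hs x -> Hs y -> Hs (mul x y),
      forall x y z, Hs x -> Hs y -> Hs z -> mul x (mul y z) = mul (mul x y) z
    & exists2 e, Hs e & forall x, Hs x -> mul e x = x /\ mul x e = x].

Definition central_subalgebra Hs mul S :=
  [/\ subspace S, (forall x, S x -> Hs x),
      (forall x y, S x -> S y -> S (mul x y)) &
      forall x y, S x -> Hs y -> mul x y = mul y x].
End Generic.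

Section Construction.
Variable gT : finGroupType.

(* C[G] : coefficient functions; M(G) = End(C[G]) : matrices indexed by G x G,
   m (g1, g2) is the coefficient of E_{g1,g2} *)
Local Notation CG := {ffun gT -> algC^o}.
Local Notation MG := {ffun gT * gT -> algC^o}.

Definition ga_mul (a b : CG) : CG :=
  [ffun x => \sum_(y : gT) a y * b (y^-1 * x)%g]%R.

(* E_alpha = sum of the elements of the conjugacy class alpha *)
Definition Eclass (al : {set gT}) : CG := [ffun x => ((x \in al) : nat)%:R]%R.

(* A = center of C[G] = span of the E_alpha *)
Definition inA (a : CG) : Prop :=
  exists c : {set gT} -> algC,
    a = (\sum_(al in classes [set: gT]) c al *: Eclass al)%R.

Definition munit (g1 g2 : gT) : MG := [ffun p => ((p.1 == g1) && (p.2 == g2) : nat)%:R]%R.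
Definition mx_mul (m m' : MG) : MG :=
  [ffun p => \sum_(h : gT) m (p.1, h) * m' (h, p.2)]%R.

(* V(g)(x) = g x g^-1, extended linearly: V(a) = sum_g a_g V(g) *)
Definition Vg (g : gT) : MG := (\sum_(x : gT) munit (g * x * g^-1)%g x)%R.
Definition Vrep (a : CG) : MG := (\sum_(g : gT) a g *: Vg g)%R.

Definition pclass (p : gT * gT) : {set gT * gT} :=
  [set (g * p.1 * g^-1, g * p.2 * g^-1) | g : gT].
Definition invol_pairs : {set gT * gT} :=
  [set p : gT * gT | (p.1 * p.1 == 1) && (p.2 * p.2 == 1)].
Definition pair_classes : {set {set gT * gT}} :=
  [set pclass p | p in invol_pairs].

Definition Ebeta (be : {set gT * gT}) : MG := (\sum_(q in be) munit q.1 q.2)%R.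

Definition inB (m : MG) : Prop :=
  exists c : {set gT * gT} -> algC,
    m = (\sum_(be in pair_classes) c be *: Ebeta be)%R.

(* H = A (+) B realised inside CG x MG *)
Local Notation HV := (CG * MG)%type.
Definition inH (x : HV) : Prop := inA x.1 /\ inB x.2.
Definition Apart (x : HV) : Prop := inA x.1 /\ x.2 = 0%R.
Definition Bpart (x : HV) : Prop := x.1 = 0%R /\ inB x.2.

(* (a + b)(a' + b') = a a' + V(a) b' + b V(a') + b b' *)
Definition hmul (x y : HV) : HV :=
  (ga_mul x.1 y.1,
   mx_mul (Vrep x.1) y.2 + mx_mul x.2 (Vrep y.1) + mx_mul x.2 y.2)%R.
End Construction.

From mathcomp Require Import all_boot all_order all_algebra all_fingroup all_field.
Set Implicit Arguments. Unset Strict Implicit. Unset Printing Implicit Defensive.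
Import GRing.Theory Num.Theory.
Local Open Scope ring_scope.

(* A is the algebra of class functions on G, and B the space of
   conjugation-invariant matrices supported on pairs of involutions, so every
   closure property of H comes down to reindexing a sum by a conjugation;
   associativity holds because V is a representation.  For semisimplicity,
   C[G] and M(G) both carry a positive involution adj (a (adj a) = 0 forces
   a = 0) preserving A and B.  If (a, b) lies in a nilpotent ideal, then so
   does (a, b) (adj a, 0), whose first component a (adj a) is nilpotent and
   hermitian, hence 0, so a = 0; then (0, b) (0, adj b) = (0, b (adj b))
   gives b = 0 in the same way. *)

Section PositiveInvolution.
Variables (T : Type) (mul : T -> T -> T) (star : T -> T) (z : T).
Hypotheses (mulA : associative mul) (mul0l : left_zero z mul).
Hypotheses (starM : forall x y, star (mul x y) = mul (star y) (star x))
  (starK : involutive star) (mul_star_eq0 : forall x, mul x (star x) = z -> x = z).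

(* [fpow x n] is the (n+1)-th power of [x], in the shape produced by [nprod]. *)
Definition fpow x n := foldl mul x (nseq n x).

Lemma foldl_mul_nseq y x n :
  foldl mul (mul y x) (nseq n x) = mul (foldl mul y (nseq n x)) x.
Proof. by elim: n y => [//|n IH] y /=; rewrite IH. Qed.

Lemma fpow0 x : fpow x 0 = x.
Proof. by []. Qed.

Lemma fpowS x n : fpow x n.+1 = mul (fpow x n) x.
Proof. by rewrite /fpow /= foldl_mul_nseq. Qed.

Lemma fpowD x m n : fpow x (m + n).+1 = mul (fpow x m) (fpow x n).
Proof.
elim: n => [|n IH]; first by rewrite addn0 fpowS.
by rewrite addnS fpowS IH fpowS mulA.
Qed.

Lemma fpow_eq0D x m n : fpow x m = z -> fpow x (m + n) = z.
Proof. by move=> xm0; elim: n => [|n IH]; rewrite ?addn0 // addnS fpowS IH mul0l. Qed.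

Lemma star_fpow x n : star x = x -> star (fpow x n) = fpow x n.
Proof.
move=> sx; elim: n => [//|n IH].
by rewrite {1}(fpowD x 0 n) starM IH fpow0 sx fpowS.
Qed.

Lemma hermitian_fpow_eq0 x n : star x = x -> fpow x n = z -> x = z.
Proof.
(* x^(n+1) is hermitian and its square x^(2n+2) vanishes along with x^(n+2). *)
move=> sx; elim: n => [//|n IH] xn0; apply/IH/mul_star_eq0.
by rewrite star_fpow // -fpowD -addSn fpow_eq0D.
Qed.

Lemma fpow_mul_star_eq0 y n : fpow (mul y (star y)) n = z -> y = z.
Proof.
by move=> yn0; apply/mul_star_eq0/(hermitian_fpow_eq0 _ yn0); rewrite starM starK.
Qed.

End PositiveInvolution.

Lemma nilpotent_set_fpow (V : lmodType algC) (mul : V -> V -> V) I y :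
  nilpotent_set mul I -> I y -> exists n, fpow mul y n = 0.
Proof.
by case=> n In Iy; exists n; apply: (In y (nseq_tuple n y)) => // i; rewrite tnth_nseq.
Qed.

Section GroupAlgebra.
Variable gT : finGroupType.
Local Notation CG := {ffun gT -> algC^o}.

Definition class_fun (a : CG) := forall x g : gT, a (x ^ g)%g = a x.

Lemma memJ_classes (al : {set gT}) x g : al \in classes [set: gT] ->
  ((x ^ g)%g \in al) = (x \in al).
Proof.
by move=> /repr_classesP[_ ->]; apply/class_eqP/class_eqP; rewrite classGidl ?inE.
Qed.

Lemma inAP a : inA a <-> class_fun a.
Proof.
split=> [[c ->] x g | aJ].
  by rewrite !sum_ffunE; apply: eq_bigr => al al_cl; rewrite !ffunE memJ_classes.
exists (fun al => a (repr al)); apply/ffunP => x.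
rewrite sum_ffunE (bigD1 (x ^: [set: gT])%g) ?mem_classes ?inE //= big1 ?addr0.
  rewrite !ffunE class_refl [RHS]mulr1.
  have /imsetP[g _ ->] : repr (x ^: [set: gT])%g \in (x ^: [set: gT])%g.
    exact: mem_repr (class_refl _ x).
  by rewrite aJ.
move=> al /andP[/repr_classesP[_ al_cl] al_x]; rewrite !ffunE.
case: (boolP (x \in al)) => [|_]; last by rewrite [LHS]mulr0.
by rewrite {1}al_cl => /class_eqP x_al; rewrite al_cl -x_al eqxx in al_x.
Qed.

Lemma ga_mulE (a b : CG) x : ga_mul a b x = \sum_y a y * b (y^-1 * x)%g.
Proof. by rewrite ffunE. Qed.

Lemma ga_mulA (a b c : CG) : ga_mul a (ga_mul b c) = ga_mul (ga_mul a b) c.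
Proof.
apply/ffunP => x; rewrite !ga_mulE.
under [RHS]eq_bigr do rewrite ga_mulE mulr_suml.
rewrite exchange_big; apply: eq_bigr => y _.
rewrite ga_mulE mulr_sumr [in RHS](reindex_inj (mulgI y)) /=.
by apply: eq_bigr => w _; rewrite mulKg invMg mulgA mulrA.
Qed.

Lemma ga_mul0l (b : CG) : ga_mul 0 b = 0.
Proof. by apply/ffunP => x; rewrite ga_mulE ffunE big1 // => y _; rewrite ffunE mul0r. Qed.

Lemma ga_mul0r (b : CG) : ga_mul b 0 = 0.
Proof. by apply/ffunP => x; rewrite ga_mulE ffunE big1 // => y _; rewrite ffunE mulr0. Qed.

Definition ga1 : CG := [ffun x => (x == 1%g)%:R].

Lemma ga_mul1l (b : CG) : ga_mul ga1 b = b.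
Proof.
apply/ffunP => x; rewrite ga_mulE (bigD1 1%g) //= big1 ?addr0.
  by rewrite ffunE eqxx mul1r invg1 mul1g.
by move=> y /negbTE y1; rewrite ffunE y1 mul0r.
Qed.

Lemma ga_mul1r (b : CG) : ga_mul b ga1 = b.
Proof.
apply/ffunP => x; rewrite ga_mulE (bigD1 x) //= big1 ?addr0.
  by rewrite ffunE mulVg eqxx mulr1.
by move=> y yx; rewrite ffunE -eq_mulVg1 (negbTE yx) mulr0.
Qed.

Lemma class_fun0 : class_fun 0.
Proof. by move=> x g; rewrite !ffunE. Qed.

Lemma class_funD a b : class_fun a -> class_fun b -> class_fun (a + b).
Proof. by move=> aJ bJ x g; rewrite !ffunE aJ bJ. Qed.

Lemma class_funZ (c : algC) a : class_fun a -> class_fun (c *: a).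
Proof. by move=> aJ x g; rewrite !ffunE aJ. Qed.

Lemma class_fun1 : class_fun ga1.
Proof. by move=> x g; rewrite !ffunE conjg_eq1. Qed.

Lemma class_funM a b : class_fun a -> class_fun b -> class_fun (ga_mul a b).
Proof.
move=> aJ bJ x g; rewrite !ga_mulE (reindex_inj (conjg_inj g)) /=.
by apply: eq_bigr => y _; rewrite -conjVg -conjMg aJ bJ.
Qed.

Lemma ga_mul_class_funC a b : class_fun b -> ga_mul a b = ga_mul b a.
Proof.
move=> bJ; apply/ffunP => x; rewrite !ga_mulE.
have inj : injective (fun y : gT => y^-1 * x)%g by move=> ? ? /mulIg/invg_inj.
rewrite (reindex_inj inj) /=; apply: eq_bigr => y _.
by rewrite mulrC invMg invgK -(bJ y x) conjgE mulgA.
Qed.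

(* The adjoint for the inner product making the group elements orthonormal. *)
Definition ga_adj (a : CG) : CG := [ffun x => (a (x^-1)%g)^*].

Lemma ga_adjK : involutive ga_adj.
Proof. by move=> a; apply/ffunP => x; rewrite !ffunE invgK conjCK. Qed.

Lemma ga_adjM a b : ga_adj (ga_mul a b) = ga_mul (ga_adj b) (ga_adj a).
Proof.
apply/ffunP => x; rewrite ffunE !ga_mulE rmorph_sum [in RHS](reindex_inj (mulgI x)) /=.
apply: eq_bigr => y _; rewrite !ffunE rmorphM mulrC invMg.
by rewrite !invMg !invgK mulKg.
Qed.

Lemma ga_mul_adj_eq0 a : ga_mul a (ga_adj a) = 0 -> a = 0.
Proof.
move=> /ffunP/(_ 1%g); rewrite ga_mulE ffunE.
under eq_bigr do rewrite ffunE mulg1 invgK -normCK.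
move=> /eqP; rewrite psumr_eq0 => [/allP a0|y _]; last exact: exprn_ge0.
apply/ffunP => y; have := a0 y (mem_index_enum _).
by rewrite ffunE expf_eq0 /= normr_eq0 => /eqP.
Qed.

Lemma class_fun_adj a : class_fun a -> class_fun (ga_adj a).
Proof. by move=> aJ x g; rewrite !ffunE -conjVg aJ. Qed.

End GroupAlgebra.

Section MatrixAlgebra.
Variable gT : finGroupType.
Local Notation MG := {ffun gT * gT -> algC^o}.

Lemma mx_mulE (m m' : MG) i j : mx_mul m m' (i, j) = \sum_h m (i, h) * m' (h, j).
Proof. by rewrite ffunE. Qed.

Lemma mx_mulA (m1 m2 m3 : MG) : mx_mul m1 (mx_mul m2 m3) = mx_mul (mx_mul m1 m2) m3.
Proof.
apply/ffunP => -[i j]; rewrite !mx_mulE.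
under eq_bigr do rewrite mx_mulE mulr_sumr.
under [RHS]eq_bigr do rewrite mx_mulE mulr_suml.
by rewrite exchange_big; apply: eq_bigr => k _; apply: eq_bigr => h _; rewrite mulrA.
Qed.

Lemma mx_mul0l (m : MG) : mx_mul 0 m = 0.
Proof. by apply/ffunP => -[i j]; rewrite mx_mulE ffunE big1 // => h _; rewrite ffunE mul0r. Qed.

Lemma mx_mul0r (m : MG) : mx_mul m 0 = 0.
Proof. by apply/ffunP => -[i j]; rewrite mx_mulE ffunE big1 // => h _; rewrite ffunE mulr0. Qed.

Lemma mx_mulDl (m1 m2 m : MG) : mx_mul (m1 + m2) m = mx_mul m1 m + mx_mul m2 m.
Proof.
apply/ffunP => -[i j]; rewrite mx_mulE [RHS]ffunE !mx_mulE -big_split /=.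
by apply: eq_bigr => h _; rewrite ffunE mulrDl.
Qed.

Lemma mx_mulDr (m1 m2 m : MG) : mx_mul m (m1 + m2) = mx_mul m m1 + mx_mul m m2.
Proof.
apply/ffunP => -[i j]; rewrite mx_mulE [RHS]ffunE !mx_mulE -big_split /=.
by apply: eq_bigr => h _; rewrite ffunE mulrDr.
Qed.

Definition mx_adj (m : MG) : MG := [ffun p => (m (p.2, p.1))^*].

Lemma mx_adjK : involutive mx_adj.
Proof. by move=> m; apply/ffunP => -[i j]; rewrite !ffunE /= conjCK. Qed.

Lemma mx_adjM m m' : mx_adj (mx_mul m m') = mx_mul (mx_adj m') (mx_adj m).
Proof.
apply/ffunP => -[i j]; rewrite ffunE /= !mx_mulE rmorph_sum.
by apply: eq_bigr => h _; rewrite !ffunE /= rmorphM mulrC.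
Qed.

Lemma mx_mul_adj_eq0 m : mx_mul m (mx_adj m) = 0 -> m = 0.
Proof.
move=> /ffunP m0; apply/ffunP => -[i j]; move: (m0 (i, i)).
rewrite mx_mulE ffunE; under eq_bigr do rewrite ffunE /= -normCK.
move=> /eqP; rewrite psumr_eq0 => [/allP mi0|h _]; last exact: exprn_ge0.
have := mi0 j (mem_index_enum _).
by rewrite ffunE expf_eq0 /= normr_eq0 => /eqP.
Qed.

End MatrixAlgebra.

Section ConjugationRepresentation.
Variable gT : finGroupType.
Local Notation CG := {ffun gT -> algC^o}.
Local Notation MG := {ffun gT * gT -> algC^o}.

Lemma eq_conjg_mul (i j g : gT) : (i == g * j * g^-1)%g = (j == i ^ g)%g.
Proof.
by rewrite conjgE; apply/eqP/eqP => ->; rewrite ?mulgKV ?mulKg // mulKVg mulgK.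
Qed.

Lemma VrepE (a : CG) i j : Vrep a (i, j) = \sum_g a g * (j == i ^ g)%g%:R.
Proof.
rewrite sum_ffunE; apply: eq_bigr => g _; rewrite ffunE sum_ffunE.
rewrite (bigD1 j) //= big1 ?addr0 => [|x xj]; rewrite ffunE /=.
  by rewrite eqxx andbT eq_conjg_mul.
by rewrite (eq_sym j) (negbTE xj) andbF.
Qed.

Lemma Vrep0 : Vrep (0 : CG) = 0.
Proof. by apply/ffunP => -[i j]; rewrite VrepE ffunE big1 // => g _; rewrite ffunE mul0r. Qed.

Lemma mx_mul_VrepE (a : CG) (m : MG) i j :
  mx_mul (Vrep a) m (i, j) = \sum_g a g * m ((i ^ g)%g, j).
Proof.
rewrite mx_mulE; under eq_bigr do rewrite VrepE mulr_suml.
rewrite exchange_big; apply: eq_bigr => g _.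
rewrite (bigD1 (i ^ g)%g) //= big1 ?addr0 => [|h /negbTE hig].
  by rewrite eqxx mulr1.
by rewrite hig mulr0 mul0r.
Qed.

Lemma mx_mulVrepE (a : CG) (m : MG) i j :
  mx_mul m (Vrep a) (i, j) = \sum_g a g * m (i, (j ^ g^-1)%g).
Proof.
rewrite mx_mulE; under eq_bigr do rewrite VrepE mulr_sumr.
rewrite exchange_big; apply: eq_bigr => g _.
rewrite (bigD1 (j ^ g^-1)%g) //= big1 ?addr0 => [|h hjg].
  by rewrite conjgKV eqxx mulr1 mulrC.
by rewrite -(canF_eq (conjgKV g)) eq_sym (negbTE hjg) mulr0 mulr0.
Qed.

Lemma VrepM (a b : CG) : Vrep (ga_mul a b) = mx_mul (Vrep a) (Vrep b).
Proof.
apply/ffunP => -[i j]; rewrite VrepE mx_mul_VrepE.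
under eq_bigr do rewrite ga_mulE mulr_suml.
rewrite exchange_big; apply: eq_bigr => y _.
rewrite VrepE mulr_sumr (reindex_inj (mulgI y)) /=.
by apply: eq_bigr => k _; rewrite mulKg mulrA conjgM.
Qed.

Lemma mx_mulVrep1l (m : MG) : mx_mul (Vrep (ga1 gT)) m = m.
Proof.
apply/ffunP => -[i j]; rewrite mx_mul_VrepE (bigD1 1%g) //= big1 ?addr0.
  by rewrite ffunE eqxx mul1r conjg1.
by move=> g /negbTE g1; rewrite ffunE g1 mul0r.
Qed.

Lemma mx_mulVrep1r (m : MG) : mx_mul m (Vrep (ga1 gT)) = m.
Proof.
apply/ffunP => -[i j]; rewrite mx_mulVrepE (bigD1 1%g) //= big1 ?addr0.
  by rewrite ffunE eqxx mul1r invg1 conjg1.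
by move=> g /negbTE g1; rewrite ffunE g1 mul0r.
Qed.

End ConjugationRepresentation.

Section PairClasses.
Variable gT : finGroupType.
Local Notation MG := {ffun gT * gT -> algC^o}.
Local Notation IP := (invol_pairs gT).

Definition pconj (p : gT * gT) (g : gT) : gT * gT := ((p.1 ^ g)%g, (p.2 ^ g)%g).

Lemma pconj1 (p : gT * gT) : pconj p 1%g = p.
Proof. by rewrite /pconj !conjg1 -surjective_pairing. Qed.

Lemma pconjM p g h : pconj p (g * h)%g = pconj (pconj p g) h.
Proof. by rewrite /pconj !conjgM. Qed.

Lemma pconjK g : cancel (pconj^~ g) (pconj^~ g^-1%g).
Proof. by move=> p; rewrite -pconjM mulgV pconj1. Qed.

Lemma invol_pairs_pconj (p : gT * gT) g : (pconj p g \in IP) = (p \in IP).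
Proof. by rewrite !inE /= -!conjMg !conjg_eq1. Qed.

Lemma mem_pclass (p q : gT * gT) : reflect (exists g, q = pconj p g) (q \in pclass p).
Proof.
apply: (iffP imsetP) => [[g _ ->] | [g ->]]; [exists g^-1%g | exists g^-1%g => //];
  by rewrite /pconj !conjgE !invgK !mulgA.
Qed.

Lemma pclass_refl (p : gT * gT) : p \in pclass p.
Proof. by apply/mem_pclass; exists 1%g; rewrite pconj1. Qed.

Lemma pclass_pconj (p q : gT * gT) g : q \in pclass p -> pconj q g \in pclass p.
Proof. by case/mem_pclass=> h ->; apply/mem_pclass; exists (h * g)%g; rewrite pconjM. Qed.

Lemma pclass_pconjE (p q : gT * gT) g : (pconj q g \in pclass p) = (q \in pclass p).
Proof.
by apply/idP/idP => [/(pclass_pconj g^-1%g)|/pclass_pconj//]; rewrite pconjK.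
Qed.

Lemma pclass_sym (p q : gT * gT) : q \in pclass p -> pclass q = pclass p.
Proof.
case/mem_pclass=> g ->; apply/setP => r; apply/mem_pclass/mem_pclass => -[h ->].
  by exists (g * h)%g; rewrite pconjM.
by exists (g^-1 * h)%g; rewrite pconjM pconjK.
Qed.

Lemma EbetaE (be : {set gT * gT}) p : Ebeta be p = (p \in be)%:R.
Proof.
rewrite sum_ffunE (eq_bigr (fun q => (q == p)%:R)) => [|q _]; last first.
  by rewrite ffunE -xpair_eqE -!surjective_pairing eq_sym.
have [pbe|pbe] := boolP (p \in be).
  by rewrite (bigD1 p) //= eqxx big1 ?addr0 // => q /andP[_ /negbTE->].
by rewrite big1 // => q qbe; case: eqP => // qp; rewrite -qp qbe in pbe.
Qed.

Definition pair_class_fun (m : MG) :=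
  (forall p, p \notin IP -> m p = 0) /\ (forall p g, m (pconj p g) = m p).

Lemma pair_class_fun0 : pair_class_fun 0.
Proof. by split=> *; rewrite !ffunE. Qed.

Lemma pair_class_funD m m' :
  pair_class_fun m -> pair_class_fun m' -> pair_class_fun (m + m').
Proof.
move=> [m0 mJ] [m'0 m'J]; split=> [p pN|p g]; rewrite !ffunE ?mJ ?m'J //.
by rewrite m0 // m'0 // addr0.
Qed.

Lemma pair_class_funZ (c : algC) m : pair_class_fun m -> pair_class_fun (c *: m).
Proof. by move=> [m0 mJ]; split=> [p pN|p g]; rewrite !ffunE ?mJ // m0 // scaler0. Qed.

Lemma pair_class_funM m m' :
  pair_class_fun m -> pair_class_fun m' -> pair_class_fun (mx_mul m m').
Proof.
move=> [m0 mJ] [m'0 m'J]; split=> [[i j]|[i j] g]; rewrite !mx_mulE.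
  rewrite inE negb_and => ijN; apply: big1 => h _.
  by case/orP: ijN => [iN|jN]; [rewrite m0 ?mul0r | rewrite m'0 ?mulr0];
    rewrite // inE negb_and ?iN ?jN ?orbT.
rewrite (reindex_inj (conjg_inj g)) /=; apply: eq_bigr => h _.
by rewrite -(mJ (i, h) g) -(m'J (h, j) g).
Qed.

Lemma pair_class_fun_Vrepl a m :
  class_fun a -> pair_class_fun m -> pair_class_fun (mx_mul (Vrep a) m).
Proof.
move=> aJ [m0 mJ]; split=> [[i j] ijN|[i j] k]; rewrite !mx_mul_VrepE.
  apply: big1 => g _; rewrite m0 ?mulr0 //.
  by move: ijN; rewrite !inE /= -conjMg conjg_eq1.
rewrite (reindex_inj (conjg_inj k)) /=; apply: eq_bigr => g _.
by rewrite aJ -conjJg -[X in m X]/(pconj ((i ^ g)%g, j) k) mJ.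
Qed.

Lemma pair_class_fun_Vrepr a m :
  class_fun a -> pair_class_fun m -> pair_class_fun (mx_mul m (Vrep a)).
Proof.
move=> aJ [m0 mJ]; split=> [[i j] ijN|[i j] k]; rewrite !mx_mulVrepE.
  apply: big1 => g _; rewrite m0 ?mulr0 //.
  by move: ijN; rewrite !inE /= -conjMg conjg_eq1.
rewrite (reindex_inj (conjg_inj k)) /=; apply: eq_bigr => g _.
by rewrite aJ -conjVg -conjJg -[X in m X]/(pconj (i, (j ^ g^-1)%g) k) mJ.
Qed.

Lemma Vrep_pair_class_funC a m :
  pair_class_fun m -> mx_mul (Vrep a) m = mx_mul m (Vrep a).
Proof.
move=> [_ mJ]; apply/ffunP => -[i j]; rewrite mx_mul_VrepE mx_mulVrepE.
by apply: eq_bigr => g _; rewrite -(mJ _ g^-1%g) /pconj /= conjgK.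
Qed.

Lemma pair_class_fun_adj m : pair_class_fun m -> pair_class_fun (mx_adj m).
Proof.
move=> [m0 mJ]; split=> [[i j] ijN|[i j] k]; rewrite !ffunE /=.
  by rewrite m0 ?rmorph0 //; move: ijN; rewrite !inE andbC.
by rewrite -[X in m X]/(pconj (j, i) k) mJ.
Qed.

Lemma inBP m : inB m <-> pair_class_fun m.
Proof.
split=> [[c ->] | [m0 mJ]].
  apply: (big_ind pair_class_fun) => [||be]; [exact: pair_class_fun0 | exact: pair_class_funD |].
  case/imsetP=> p0 p0IP ->; apply: pair_class_funZ.
  split=> [p|p g]; rewrite !EbetaE ?pclass_pconjE //.
  by case: (boolP (p \in pclass p0)) => // /mem_pclass[g ->]; rewrite invol_pairs_pconj p0IP.
exists (fun be => m (repr be)); apply/ffunP => p; rewrite sum_ffunE.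
have [pIP|pN] := boolP (p \in IP); last first.
  rewrite m0 // big1 // => _ /imsetP[p0 p0IP ->]; rewrite ffunE EbetaE.
  case: (boolP (p \in pclass p0)) => [/mem_pclass[g pE]|]; last by rewrite [LHS]mulr0.
  by rewrite pE invol_pairs_pconj p0IP in pN.
rewrite (bigD1 (pclass p)) /=; last exact: imset_f.
rewrite big1 ?addr0 => [|_ /andP[/imsetP[p0 _ ->] p0p]]; rewrite ffunE EbetaE.
  rewrite pclass_refl [RHS]mulr1.
  by have /mem_pclass[g ->] := mem_repr _ (pclass_refl p); rewrite mJ.
case: (boolP (p \in pclass p0)) => [/pclass_sym pp0|]; last by rewrite [LHS]mulr0.
by rewrite pp0 eqxx in p0p.
Qed.

End PairClasses.

Section AlgebraH.
Variable gT : finGroupType.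
Local Notation CG := {ffun gT -> algC^o}.
Local Notation MG := {ffun gT * gT -> algC^o}.
Local Notation HV := (CG * MG)%type.

Lemma inH_hmul (x y : HV) : inH x -> inH y -> inH (hmul x y).
Proof.
move=> [/inAP aJ /inBP bB] [/inAP a'J /inBP b'B].
split; first exact/inAP/class_funM.
apply/inBP; do 2?apply: pair_class_funD.
- exact: pair_class_fun_Vrepl.
- exact: pair_class_fun_Vrepr.
- exact: pair_class_funM.
Qed.

Lemma hmulA (x y z : HV) : hmul x (hmul y z) = hmul (hmul x y) z.
Proof.
rewrite /hmul /= ga_mulA !VrepM !mx_mulDl !mx_mulDr !mx_mulA; congr pair.
rewrite !addrA -!addrA; congr (_ + _); congr (_ + _); rewrite addrCA; congr (_ + _).
by rewrite [RHS]addrCA; congr (_ + _); exact: addrCA.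
Qed.

Lemma hmul1l (x : HV) : hmul (ga1 gT, 0) x = x.
Proof.
by rewrite /hmul /= ga_mul1l mx_mulVrep1l !mx_mul0l !addr0 -surjective_pairing.
Qed.

Lemma hmul1r (x : HV) : hmul x (ga1 gT, 0) = x.
Proof.
by rewrite /hmul /= ga_mul1r mx_mulVrep1r !mx_mul0r addr0 add0r -surjective_pairing.
Qed.

Lemma inH_assoc_unital : assoc_unital_alg (@inH gT) (@hmul gT).
Proof.
split=> [x y|x y z _ _ _|]; [exact: inH_hmul | exact: hmulA |].
exists (ga1 gT, 0); last by move=> x _; rewrite hmul1l hmul1r.
by split; [apply/inAP/class_fun1 | apply/inBP/pair_class_fun0].
Qed.

Lemma Apart_central : central_subalgebra (@inH gT) (@hmul gT) (@Apart gT).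
Proof.
split.
- split=> [|c [a b] [a' b'] [/inAP aJ /= ->] [/inAP a'J /= ->]].
    by split=> //; apply/inAP/class_fun0.
  by split=> /=; [apply/inAP/class_funD/a'J/class_funZ | rewrite scaler0 addr0].
- by move=> [a b] [aA /= ->]; split=> //; apply/inBP/pair_class_fun0.
- move=> [a b] [a' b'] [/inAP aJ /= ->] [/inAP a'J /= ->]; rewrite /hmul /=.
  by rewrite !mx_mul0l !mx_mul0r !addr0; split=> //; apply/inAP/class_funM.
- move=> [a b] [a' b'] [/inAP aJ /= ->] [_ /inBP b'B]; rewrite /hmul /=.
  rewrite -(ga_mul_class_funC a' aJ) (Vrep_pair_class_funC _ b'B).
  by rewrite !mx_mul0l !mx_mul0r !addr0 add0r.
Qed.

Lemma Bpart_ideal : two_sided_ideal (@inH gT) (@hmul gT) (@Bpart gT).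
Proof.
split.
- split=> [|c [a b] [a' b'] [/= -> /inBP bB] [/= -> /inBP b'B]].
    by split=> //; apply/inBP/pair_class_fun0.
  by split=> /=; [rewrite scaler0 addr0 | apply/inBP/pair_class_funD/b'B/pair_class_funZ].
- by move=> [a b] [/= -> bB]; split=> //; apply/inAP/class_fun0.
- move=> [a b] [a' b'] [/inAP aJ /inBP bB] [/= -> /inBP b'B]; rewrite /hmul /=.
  rewrite ga_mul0l ga_mul0r Vrep0 mx_mul0l mx_mul0r addr0 add0r.
  split; split=> //; apply/inBP/pair_class_funD.
  + exact: pair_class_fun_Vrepl.
  + exact: pair_class_funM.
  + exact: pair_class_fun_Vrepr.
  + exact: pair_class_funM.
Qed.

Lemma fpow_hmul_fst (x : HV) n : (fpow (@hmul gT) x n).1 = fpow (@ga_mul gT) x.1 n.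
Proof. by rewrite /fpow; elim: n {1 3}x => //= n IH y; rewrite IH. Qed.

Lemma hmul_Bpart (d c : MG) : hmul (0, d) (0, c) = (0, mx_mul d c).
Proof. by rewrite /hmul /= ga_mul0l Vrep0 mx_mul0l mx_mul0r !add0r. Qed.

Lemma fpow_hmul_Bpart (d : MG) n :
  fpow (@hmul gT) (0, d) n = (0, fpow (@mx_mul gT) d n).
Proof. by rewrite /fpow; elim: n {1 3}d => //= n IH c; rewrite hmul_Bpart IH. Qed.

Lemma inH_semisimple : semisimple_alg (@inH gT) (@hmul gT).
Proof.
move=> I [_ IH Imul] Inil.
have I_fst0 x : I x -> x.1 = 0.
  move=> Ix; have [/inAP aJ _] := IH x Ix.
  have Hadj : inH (ga_adj x.1, 0 : MG).
    by split; [apply/inAP/class_fun_adj | apply/inBP/pair_class_fun0].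
  have [n /(congr1 fst)] := nilpotent_set_fpow Inil (Imul _ _ Hadj Ix).2.
  rewrite fpow_hmul_fst /=.
  by move/(fpow_mul_star_eq0 (@ga_mulA gT) (@ga_mul0l gT) (@ga_adjM gT) (@ga_adjK gT)
    (@ga_mul_adj_eq0 gT)).
move=> [a b] Iab; have /= a0 := I_fst0 _ Iab; subst a.
have [_ /inBP bB] := IH _ Iab.
have Hadj : inH (0 : CG, mx_adj b).
  by split; [apply/inAP/class_fun0 | apply/inBP/pair_class_fun_adj].
have [n] := nilpotent_set_fpow Inil (Imul _ _ Hadj Iab).2.
rewrite hmul_Bpart fpow_hmul_Bpart => -[].
by move/(fpow_mul_star_eq0 (@mx_mulA gT) (@mx_mul0l gT) (@mx_adjM gT) (@mx_adjK gT)
  (@mx_mul_adj_eq0 gT)) ->.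
Qed.

End AlgebraH.

Theorem lemma2p8 (gT : finGroupType) :
  [/\ assoc_unital_alg (@inH gT) (@hmul gT),
      semisimple_alg (@inH gT) (@hmul gT),
      central_subalgebra (@inH gT) (@hmul gT) (@Apart gT) &
      two_sided_ideal (@inH gT) (@hmul gT) (@Bpart gT)].
Proof.
split; [exact: inH_assoc_unital | exact: inH_semisimple | exact: Apart_central |].
exact: Bpart_ideal.
Qed.
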